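(* Let $K$ be a semifield and $P$ a polygon. Let $d_1,\dots,d_m$ be pairwise non-crossing internal diagonals of $P$ dividing $P$ into subpolygons $P_1,\dots,P_{m+1}$, let $D_i$ be a dissection of $P_i$, and set $D = \{d_1,\dots,d_m\} \cup D_1 \cup \dots \cup D_{m+1}$ (a dissection of $P$). Let $f_i : \operatorname{diag}(P_i) \to K$ be a weak frieze with respect to $D_i$ for each $i$, such that $f_i(d) = f_j(d)$ whenever $P_i$ and $P_j$ share a diagonal $d$, and let $f : \operatorname{diag}(P) \to K$ be the unique weak frieze with respect to $D$ with $f|_{\operatorname{diag}(P_i)} = f_i$ for all $i$. Then $f$ is a frieze if and only if each $f_i$ is a frieze.
   Context: A semifield is a set $K$ with binary operations $+$ and $\cdot$ such that $+$ is associative and commutative, $(K,\cdot)$ is a commutative group, and $\cdot$ distributes over $+$; no subtraction is assumed. A polygon is a finite set $V$ of at least three vertices with a cyclic order. A diagonal is a two-element subset of $V$ (edges $\{\alpha,\alpha^+\}$ count as diagonals); $\operatorname{diag}(P)$ is the set of diagonals; non-edges are internal. $\{\alpha,\beta\}$ and $\{\gamma,\delta\}$ cross if $\alpha,\beta,\gamma,\delta$ are four distinct vertices appearing in the cyclic order as $\alpha,\gamma,\beta,\delta$ or $\alpha,\delta,\beta,\gamma$. A subpolygon is a subset of $V$ of at least three vertices with the induced cyclic order. A dissection is a (possibly empty) set of pairwise non-crossing internal diagonals. Write $f(\alpha,\beta):=f(\{\alpha,\beta\})$. A map $f$ on the diagonals of a polygon with values in $K$ is a frieze if it satisfies the Ptolemy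 relation $f(\alpha,\beta)f(\gamma,\delta) = f(\alpha,\gamma)f(\beta,\delta) + f(\alpha,\delta)f(\beta,\gamma)$ for all crossing diagonals $\{\alpha,\beta\}$, $\{\gamma,\delta\}$; it is a weak frieze with respect to a dissection $D$ if the Ptolemy relation holds whenever $\{\alpha,\beta\}$, $\{\gamma,\delta\}$ cross and $\{\gamma,\delta\}\in D$. (Existence and uniqueness of $f$ is known.) *)

From mathcomp Require Import all_boot.
Set Warnings "-notation-overridden".
Set Implicit Arguments. Unset Strict Implicit. Unset Printing Implicit Defensive.

Record semifield := Semifield {
  sf_car :> Type;
  sf_add : sf_car -> sf_car -> sf_car;
  sf_mul : sf_car -> sf_car -> sf_car;
  sf_one : sf_car;
  sf_inv : sf_car -> sf_car;
  sf_addA : forall x y z, sf_add x (sf_add y z) = sf_add (sf_add x y) z;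
  sf_addC : forall x y, sf_add x y = sf_add y x;
  sf_mulA : forall x y z, sf_mul x (sf_mul y z) = sf_mul (sf_mul x y) z;
  sf_mulC : forall x y, sf_mul x y = sf_mul y x;
  sf_mul1 : forall x, sf_mul sf_one x = x;
  sf_mulV : forall x, sf_mul (sf_inv x) x = sf_one;
  sf_mulDr : forall x y z, sf_mul x (sf_add y z) = sf_add (sf_mul x y) (sf_mul x z)
}.

(* Polygon P: vertex set 'I_n (n >= 3) with the natural cyclic order
   0 -> 1 -> ... -> n-1 -> 0. *)
Section Poly.
Variable n : nat.
Local Notation V := 'I_n.

Definition cyc3 (x y z : V) : bool :=
  [|| (x < y < z)%N, (y < z < x)%N | (z < x < y)%N].

Definition crossb (a b c d : V) : bool :=
  (cyc3 a c b && cyc3 a b d) || (cyc3 a d b && cyc3 a b c).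

Definition is_diag (S d : {set V}) : Prop := d \subset S /\ #|d| = 2.

Definition is_edge (S d : {set V}) : Prop :=
  exists x y, [/\ x \in S, y \in S, x != y, d = [set x; y] &
     forall z, z \in S -> ~~ cyc3 x z y].

Definition is_internal (S d : {set V}) : Prop := is_diag S d /\ ~ is_edge S d.

Definition diag_cross (d1 d2 : {set V}) : Prop :=
  exists a b c d, [/\ d1 = [set a; b], d2 = [set c; d] & crossb a b c d].

Definition is_subpolygon (S : {set V}) : Prop := (3 <= #|S|)%N.

Definition dissection (S : {set V}) (D : {set {set V}}) : Prop :=
  (forall d, d \in D -> is_internal S d) /\
  (forall d1 d2, d1 \in D -> d2 \in D -> ~ diag_cross d1 d2).

(* a map on diag(S) is modelled by f : {set V} -> K, only its values on
   diagonals of S matter *)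
Definition ptolemy (K : semifield) (f : {set V} -> K) (a b c d : V) : Prop :=
  sf_mul (f [set a; b]) (f [set c; d]) =
  sf_add (sf_mul (f [set a; c]) (f [set b; d]))
         (sf_mul (f [set a; d]) (f [set b; c])).

Definition frieze (K : semifield) (S : {set V}) (f : {set V} -> K) : Prop :=
  forall a b c d, a \in S -> b \in S -> c \in S -> d \in S ->
    crossb a b c d -> ptolemy f a b c d.

Definition weak_frieze (K : semifield) (S : {set V}) (D : {set {set V}})
    (f : {set V} -> K) : Prop :=
  forall a b c d, a \in S -> b \in S -> c \in S -> d \in S ->
    crossb a b c d -> [set c; d] \in D -> ptolemy f a b c d.

(* the subpolygons cut out by a dissection E of P: subpolygons all of whose
   edges are edges of P or diagonals in E, and which contain no diagonal of E
   as an internal diagonal *)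
Definition is_cell (E : {set {set V}}) (C : {set V}) : Prop :=
  [/\ is_subpolygon C,
      (forall d, is_edge C d -> is_edge setT d \/ d \in E) &
      (forall e, e \in E -> ~ is_internal C e)].

End Poly.

(* Call a diagonal of E separating for a vertex set S if it crosses a chord
   with both ends in S.  By induction on the number of separating diagonals,
   f satisfies the Ptolemy relations on every vertex set S.  If no diagonal
   separates S, the vertices that no diagonal of E separates from S form a
   cell containing S, on which f is the frieze of that cell.  Otherwise some
   pq in E separates S; the two halves into which pq cuts S together with p
   and q are separated by fewer diagonals, the Ptolemy relations for chords
   crossing pq hold since f is a weak frieze with respect to D, which
   contains E, and the exchange relation of a pentagon (three of its Ptolemy
   relations imply a fourth, as K is cancellative) glues the two halves.
   The converse is restriction. *)

From mathcomp Require Import all_boot zify.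
From Stdlib Require Import Ring.

Set Implicit Arguments. Unset Strict Implicit. Unset Printing Implicit Defensive.

Ltac cyclic := unfold crossb, cyc3 in *; lia.

Section SemifieldAlgebra.
Variable K : semifield.

Lemma sf_mulI (a : K) : injective (sf_mul a).
Proof.
move=> x y eq_ax_ay.
by rewrite -(sf_mul1 x) -(sf_mul1 y) -(sf_mulV a) -!sf_mulA eq_ax_ay.
Qed.

(* K has no zero; adjoining one as None yields a commutative semiring, in
   which the ring tactic can normalize polynomial identities over K. *)
Definition oadd (x y : option K) : option K :=
  match x, y with
  | None, _ => y
  | _, None => x
  | Some a, Some b => Some (sf_add a b)
  end.

Definition omul (x y : option K) : option K :=
  if x is Some a then (if y is Some b then Some (sf_mul a b) else None) else None.

Lemma option_semiring :
  semi_ring_theory None (Some (sf_one K)) oadd omul (@eq (option K)).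
Proof.
constructor.
- by case.
- by case=> [a|] [b|] //=; rewrite sf_addC.
- by case=> [a|] [b|] [c|] //=; rewrite sf_addA.
- by case=> [a|] //=; rewrite sf_mul1.
- by [].
- by case=> [a|] [b|] //=; rewrite sf_mulC.
- by case=> [a|] [b|] [c|] //=; rewrite sf_mulA.
- case=> [a|] [b|] [c|] //=.
  by rewrite sf_mulC sf_mulDr; congr (Some (sf_add _ _)); apply: sf_mulC.
Qed.

Add Ring option_semiring : option_semiring.

Local Infix "+" := oadd.
Local Infix "*" := omul.

Lemma option_pentagon_exchange (x12 x13 x14 x15 x23 x24 x25 x34 x35 x45 : option K) :
  x13 * x24 = x12 * x34 + x14 * x23 ->
  x35 * x14 = x34 * x15 + x13 * x45 ->
  x14 * x25 = x45 * x12 + x24 * x15 ->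
  x13 * x14 * (x24 * x35) = x13 * x14 * (x23 * x45 + x25 * x34).
Proof.
move=> e1 e3 e4.
transitivity ((x13 * x24) * (x35 * x14)); first by ring.
rewrite e1 e3.
transitivity (x34 * x15 * (x12 * x34 + x14 * x23)
              + x12 * x34 * x13 * x45 + x14 * x23 * x13 * x45); first by ring.
rewrite -e1.
transitivity (x13 * x14 * x23 * x45 + x13 * x34 * (x45 * x12 + x24 * x15));
  first by ring.
by rewrite -e4; ring.
Qed.

Lemma pentagon_exchange (x12 x13 x14 x15 x23 x24 x25 x34 x35 x45 : K) :
  sf_mul x13 x24 = sf_add (sf_mul x12 x34) (sf_mul x14 x23) ->
  sf_mul x35 x14 = sf_add (sf_mul x34 x15) (sf_mul x13 x45) ->
  sf_mul x14 x25 = sf_add (sf_mul x45 x12) (sf_mul x24 x15) ->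
  sf_mul x24 x35 = sf_add (sf_mul x23 x45) (sf_mul x25 x34).
Proof.
move=> e1 e3 e4; apply: (@sf_mulI (sf_mul x13 x14)); apply: Some_inj.
exact: (@option_pentagon_exchange (Some x12) (Some x13) (Some x14) (Some x15)
  (Some x23) (Some x24) (Some x25) (Some x34) (Some x35) (Some x45)
  (congr1 Some e1) (congr1 Some e3) (congr1 Some e4)).
Qed.

End SemifieldAlgebra.

Lemma set2C (T : finType) (x y : T) : [set x; y] = [set y; x].
Proof. exact: setUC. Qed.

Section PtolemyRelations.
Variables (K : semifield) (n : nat) (f : {set 'I_n} -> K).
Implicit Types (a b c d q : 'I_n).

Lemma ptolemy_swapl a b c d : ptolemy f a b c d -> ptolemy f b a c d.
Proof.
rewrite /ptolemy (set2C b a) => ->.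
by rewrite sf_addC; congr sf_add; apply: sf_mulC.
Qed.

Lemma ptolemy_swapr a b c d : ptolemy f a b c d -> ptolemy f a b d c.
Proof.
rewrite /ptolemy (set2C d c) => ->.
by rewrite sf_addC; congr sf_add; apply: sf_mulC.
Qed.

Lemma ptolemy_sym a b c d : ptolemy f a b c d -> ptolemy f c d a b.
Proof.
rewrite /ptolemy sf_mulC => ->.
by rewrite (set2C c a) (set2C d b) (set2C c b) (set2C d a); congr sf_add; apply: sf_mulC.
Qed.

Lemma ptolemy_pentagon v1 v2 v3 v4 v5 :
  ptolemy f v1 v3 v2 v4 -> ptolemy f v3 v5 v4 v1 -> ptolemy f v4 v1 v5 v2 ->
  ptolemy f v2 v4 v3 v5.
Proof.
rewrite /ptolemy (set2C v3 v2) (set2C v4 v1) (set2C v5 v1) (set2C v3 v1)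
  (set2C v5 v4) (set2C v5 v2) (set2C v4 v2) (set2C v4 v3).
exact: pentagon_exchange.
Qed.

Lemma ptolemy_from_apex q a b c d :
  ptolemy f q b c d -> ptolemy f q d b a -> ptolemy f q d a c -> ptolemy f a b c d.
Proof.
move=> qbcd qdba qdac; apply/ptolemy_swapl/ptolemy_sym.
exact: ptolemy_pentagon qbcd (ptolemy_swapr (ptolemy_sym qdba)) (ptolemy_swapl qdac).
Qed.

Lemma ptolemy_by_orientation (S : {set 'I_n}) a b c d :
  (forall c' d', c' \in S -> d' \in S -> cyc3 a c' b -> cyc3 a b d' -> ptolemy f a b c' d') ->
  c \in S -> d \in S -> crossb a b c d -> ptolemy f a b c d.
Proof.
move=> oriented cS dS /orP [/andP [acb abd] | /andP [adb abc]]; first exact: oriented.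
exact/ptolemy_swapr/oriented.
Qed.

End PtolemyRelations.

Section CyclicOrder.
Variable n : nat.
Implicit Types (a b c d p q s t u v w x y z : 'I_n).

Lemma crossb_swapl a b c d : crossb a b c d -> crossb b a c d.
Proof. cyclic. Qed.

Lemma crossb_swapr a b c d : crossb a b c d -> crossb a b d c.
Proof. cyclic. Qed.

Lemma crossb_sym a b c d : crossb a b c d -> crossb c d a b.
Proof. cyclic. Qed.

Lemma crossb_neq a b c d : crossb a b c d ->
  [&& (a:nat) != b, (a:nat) != c, (a:nat) != d, (b:nat) != c, (b:nat) != d & (c:nat) != d].
Proof. cyclic. Qed.

Lemma cyc3_rot x y z : cyc3 x y z = cyc3 y z x.
Proof. by rewrite /cyc3; apply/idP/idP; lia. Qed.

Lemma cyc3_crossb s t y z : cyc3 s y t -> cyc3 t z s -> crossb s t y z.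
Proof. cyclic. Qed.

Definition closed_arc p q : {set 'I_n} :=
  [set v : 'I_n | [|| (v:nat) == p, (v:nat) == q | cyc3 p v q]].

Lemma crossb_opposite p q u v : crossb p q u v -> cyc3 q u p || cyc3 q v p.
Proof. cyclic. Qed.

Lemma chord_side_p p q s t y z : cyc3 p z q -> cyc3 q y p ->
  ~~ crossb p q s t -> cyc3 s p t -> cyc3 t z s -> cyc3 s y t.
Proof. cyclic. Qed.

Lemma chord_side_q p q s t y z : cyc3 p z q -> cyc3 q y p ->
  ~~ crossb p q s t -> cyc3 s q t -> cyc3 t z s -> cyc3 s y t.
Proof. cyclic. Qed.

Lemma crossb_far_side p q s t w y z : (w == p) || (w == q) ->
  cyc3 p z q -> cyc3 q y p -> ~~ crossb p q s t -> crossb s t w z -> crossb s t y z.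
Proof.
move=> pq_w pzq qyp nst.
have nts : ~~ crossb p q t s by apply: contra nst => /crossb_swapr.
have side s' t' : ~~ crossb p q s' t' -> cyc3 s' w t' -> cyc3 t' z s' -> cyc3 s' y t'.
  by case/orP: pq_w => /eqP ->; [exact: chord_side_p pzq qyp | exact: chord_side_q pzq qyp].
case/orP=> /andP [].
  by move=> swt; rewrite cyc3_rot => tzs; apply: cyc3_crossb (side _ _ nst swt tzs) tzs.
move=> szt; rewrite cyc3_rot => tws.
exact/crossb_swapl/(cyc3_crossb (side _ _ nts tws szt) szt).
Qed.

Lemma crossb_from_endpoint p q u v s t w z :
  crossb p q u v -> ~~ crossb p q s t -> crossb s t w z ->
  (w == p) || (w == q) -> z \in closed_arc p q ->
  z \notin [set p; q] /\ (crossb s t u z || crossb s t v z).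
Proof.
move=> puv nst stwz pq_w zarc.
have pzq : cyc3 p z q.
  have /and4P [_ _ _ /and3P [_ _ neq_wz]] := crossb_neq stwz.
  move: zarc; rewrite inE => /or3P [/eqP/ord_inj zp | /eqP/ord_inj zq | //]; subst z;
    case/orP: pq_w stwz neq_wz => /eqP -> stz; rewrite ?eqxx // => _; case/negP: nst.
  - exact/crossb_swapl/crossb_sym.
  - exact/crossb_sym.
split; first by clear -pzq; move: pzq; rewrite !inE -!val_eqE /=; cyclic.
case/orP: (crossb_opposite puv) => qyp.
  by rewrite (crossb_far_side pq_w pzq qyp nst stwz).
by rewrite (crossb_far_side pq_w pzq qyp nst stwz) orbT.
Qed.

Lemma crossb_arc_ends p q s t w z : crossb s t w z ->
  w \in closed_arc p q -> z \in closed_arc p q ->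
  s \in [set p; q] -> t \in [set p; q] -> False.
Proof. by rewrite !inE -!val_eqE /=; cyclic. Qed.

End CyclicOrder.

Section Gluing.
Variables (K : semifield) (n : nat) (f : {set 'I_n} -> K) (S : {set 'I_n}) (p q : 'I_n).
Hypotheses (pS : p \in S) (qS : q \in S) (neq_pq : (p:nat) != q).
Hypothesis frieze_pq : frieze (S :&: closed_arc p q) f.
Hypothesis frieze_qp : frieze (S :&: closed_arc q p) f.
Hypothesis ptolemy_pq :
  forall a b, a \in S -> b \in S -> crossb a b p q -> ptolemy f a b p q.

Lemma ptolemy_at_apex b c d : b \in S -> c \in S -> d \in S ->
  crossb p b c d -> ptolemy f p b c d.
Proof.
move=> bS; apply: ptolemy_by_orientation => {}c {}d cS dS pcb pbd.
(* Either q is b, or p, b, c, d lie in one half, or they form a pentagon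
   with q. *)
have : (q:nat) = b \/ (q:nat) = c \/ (q:nat) = d \/
    cyc3 p q c \/ cyc3 c q b \/ cyc3 b q d \/ cyc3 d q p.
  by clear -pcb pbd neq_pq; cyclic.
case=> [/ord_inj qb | [/ord_inj qc | [/ord_inj qd | [pqc | [cqb | [bqd | dqp]]]]]].
- by subst b; apply/ptolemy_sym/ptolemy_pq => //; cyclic.
- by subst c; apply: frieze_qp; rewrite ?inE /= ?pS ?bS ?dS ?qS //; cyclic.
- by subst d; apply: frieze_pq; rewrite ?inE /= ?pS ?bS ?cS ?qS //; cyclic.
- by apply: frieze_qp; rewrite ?inE /= ?pS ?bS ?cS ?dS //; cyclic.
- have pqcb : ptolemy f p q c b by apply/ptolemy_sym/ptolemy_pq => //; cyclic.
  have dcpq : ptolemy f d c p q by apply: ptolemy_pq => //; cyclic.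
  have qdbp : ptolemy f q d b p.
    by apply: frieze_qp; rewrite ?inE /= ?pS ?bS ?qS ?dS //; cyclic.
  exact/ptolemy_swapr/ptolemy_swapl/(ptolemy_pentagon qdbp dcpq pqcb).
- have qpdc : ptolemy f q p d c.
    by apply/ptolemy_swapl/ptolemy_sym/ptolemy_pq => //; cyclic.
  have bdqp : ptolemy f b d q p by apply/ptolemy_swapr/ptolemy_pq => //; cyclic.
  have pbcq : ptolemy f p b c q.
    by apply: frieze_pq; rewrite ?inE /= ?pS ?bS ?cS ?qS //; cyclic.
  have cqbd := ptolemy_pentagon pbcq bdqp qpdc.
  exact/ptolemy_swapr/ptolemy_sym/(ptolemy_pentagon qpdc pbcq cqbd).
- by apply: frieze_pq; rewrite ?inE /= ?pS ?bS ?cS ?dS //; cyclic.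
Qed.

Lemma frieze_glue : frieze S f.
Proof.
move=> a b c d aS bS; apply: ptolemy_by_orientation => {}c {}d cS dS acb abd.
have : (p:nat) = a \/ (p:nat) = b \/ (p:nat) = c \/ (p:nat) = d \/
    cyc3 a p c \/ cyc3 c p b \/ cyc3 b p d \/ cyc3 d p a.
  by clear -acb abd; cyclic.
case=> [/ord_inj pa | [/ord_inj pb | [/ord_inj pc | [/ord_inj pd | [apc | [cpb | [bpd | dpa]]]]]]].
- by subst a; apply: ptolemy_at_apex => //; cyclic.
- by subst b; apply/ptolemy_swapl/ptolemy_at_apex => //; cyclic.
- by subst c; apply/ptolemy_sym/ptolemy_at_apex => //; cyclic.
- by subst d; apply/ptolemy_swapr/ptolemy_sym/ptolemy_at_apex => //; cyclic.
- by apply: (ptolemy_from_apex (q := p)); apply: ptolemy_at_apex => //; cyclic.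
- apply/ptolemy_swapl/ptolemy_sym.
  by apply: (ptolemy_from_apex (q := p)); apply: ptolemy_at_apex => //; cyclic.
- apply/ptolemy_swapr/ptolemy_swapl.
  by apply: (ptolemy_from_apex (q := p)); apply: ptolemy_at_apex => //; cyclic.
- apply/ptolemy_swapr/ptolemy_sym.
  by apply: (ptolemy_from_apex (q := p)); apply: ptolemy_at_apex => //; cyclic.
Qed.

End Gluing.

Section SeparatingDiagonals.
Variable n : nat.
Implicit Types (E : {set {set 'I_n}}) (S : {set 'I_n}) (e : {set 'I_n}) (p q s t u v : 'I_n).

Lemma dissection_noncrossing (P : {set 'I_n}) E p q s t :
  dissection P E -> [set p; q] \in E -> [set s; t] \in E -> ~~ crossb p q s t.
Proof.
move=> [_ noncrossing] pqE stE; apply/negP => pq_st.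
by apply: (noncrossing _ _ pqE stE); exists p, q, s, t.
Qed.

Definition separates e u v : bool :=
  [exists st : 'I_n * 'I_n, (e == [set st.1; st.2]) && crossb st.1 st.2 u v].

Definition separating E S : {set {set 'I_n}} :=
  [set e in E | [exists u in S, exists v in S, separates e u v]].

Lemma separatesP e u v :
  reflect (exists s t, e = [set s; t] /\ crossb s t u v) (separates e u v).
Proof.
apply: (iffP existsP) => [[[s t] /andP [/eqP -> st_uv]] | [s [t [-> st_uv]]]].
  by exists s, t.
by exists (s, t); rewrite eqxx.
Qed.

Lemma separatingP E S e : reflect
  (e \in E /\ exists u v, [/\ u \in S, v \in S & separates e u v])
  (e \in separating E S).
Proof.
rewrite inE; apply: (iffP andP) => [[eE] | [eE [u [v [uS vS sep_uv]]]]].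
  by case/existsP=> u /andP [uS /existsP [v /andP [vS sep_uv]]]; split => //; exists u, v.
by split => //; apply/existsP; exists u; rewrite uS; apply/existsP; exists v; rewrite vS.
Qed.

Lemma mem_separating E S e s t u v : e \in E -> u \in S -> v \in S ->
  e = [set s; t] -> crossb s t u v -> e \in separating E S.
Proof.
move=> eE uS vS e_st st_uv; apply/separatingP; split => //.
by exists u, v; split => //; apply/separatesP; exists s, t.
Qed.

Section Halving.
Variables (E : {set {set 'I_n}}) (S : {set 'I_n}) (p q u v : 'I_n).
Hypotheses (dissE : dissection setT E) (pqE : [set p; q] \in E).
Hypotheses (uS : u \in S) (vS : v \in S) (pq_uv : crossb p q u v).

Local Notation half := ((S :|: [set p; q]) :&: closed_arc p q).

Lemma separating_half_subset : separating E half \subset separating E S.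
Proof.
apply/subsetP => e /separatingP [eE [w [z [wH zH /separatesP [s [t [e_st st_wz]]]]]]].
have nst : ~~ crossb p q s t by apply: dissection_noncrossing dissE pqE _; rewrite -e_st.
move: wH zH; rewrite !in_setI !in_setU !in_set1 => /andP [wSpq warc] /andP [zSpq zarc].
have [wS | wNS] := boolP (w \in S).
  have [zS | zNS] := boolP (z \in S); first exact: mem_separating eE wS zS e_st st_wz.
  rewrite (negbTE zNS) /= in zSpq.
  have [_ /orP [st_uw | st_vw]] :=
    crossb_from_endpoint pq_uv nst (crossb_swapr st_wz) zSpq warc.
    exact: mem_separating eE uS wS e_st st_uw.
  exact: mem_separating eE vS wS e_st st_vw.
rewrite (negbTE wNS) /= in wSpq.
have [zNpq /orP [st_uz | st_vz]] := crossb_from_endpoint pq_uv nst st_wz wSpq zarc;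
  move: zSpq; rewrite -in_set2 (negbTE zNpq) orbF => zS.
  exact: mem_separating eE uS zS e_st st_uz.
exact: mem_separating eE vS zS e_st st_vz.
Qed.

Lemma separating_half_proper : separating E half \proper separating E S.
Proof.
apply/properP; split; first exact: separating_half_subset.
exists [set p; q]; first exact: mem_separating pqE uS vS erefl pq_uv.
apply/negP => /separatingP [_ [w [z [wH zH /separatesP [s [t [e_st st_wz]]]]]]].
have sE : s \in [set p; q] by rewrite e_st !inE eqxx.
have tE : t \in [set p; q] by rewrite e_st !inE eqxx orbT.
move: wH zH; rewrite !in_setI => /andP [_ warc] /andP [_ zarc].
exact: crossb_arc_ends st_wz warc zarc sE tE.
Qed.

End Halving.
End SeparatingDiagonals.

Lemma frieze_of_unseparated (K : semifield) n (f : {set 'I_n} -> K)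
    (E D : {set {set 'I_n}}) :
  dissection setT E -> {subset E <= D} -> weak_frieze setT D f ->
  (forall S, separating E S = set0 -> frieze S f) -> forall S, frieze S f.
Proof.
move=> dissE sub_ED wfD base S.
have [k] := ubnP #|separating E S|; elim: k S => // k IH S; rewrite ltnS => le_sep_k.
have [/base // | [e]] := set_0Vmem (separating E S).
case/separatingP=> eE [u [v [uS vS /separatesP [p [q [e_pq pq_uv]]]]]]; subst e.
suff frieze_S' : frieze (S :|: [set p; q]) f.
  by move=> a b c d aS bS cS dS; apply: frieze_S'; rewrite inE ?aS ?bS ?cS ?dS.
have pS' : p \in S :|: [set p; q] by rewrite !inE eqxx !orbT.
have qS' : q \in S :|: [set p; q] by rewrite !inE eqxx !orbT.
have /andP [neq_pq _] := crossb_neq pq_uv.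
apply: frieze_glue pS' qS' neq_pq _ _ _.
- apply: IH; apply: leq_trans le_sep_k.
  exact: proper_card (separating_half_proper dissE eE uS vS pq_uv).
- have qpE : [set q; p] \in E by rewrite set2C.
  apply: IH; apply: leq_trans le_sep_k; rewrite (set2C p q).
  exact: proper_card (separating_half_proper dissE qpE uS vS (crossb_swapl pq_uv)).
- by move=> a b aS bS ab_pq; apply: wfD; rewrite ?inE // sub_ED.
Qed.

Section Offsets.
Variable n : nat.
Implicit Types (a b c s t u v w x y z : 'I_n).

Definition offset x z : nat := if (x <= z)%N then z - x else z + n - x.
Arguments offset : simpl never.

Definition ncyc3 (i j k : nat) : bool := [|| (i < j < k)%N, (j < k < i)%N | (k < i < j)%N].

Lemma offsetE x z : (z < n)%N /\
  ((x <= z)%N /\ offset x z = z - x \/ (z < x)%N /\ offset x z = z + n - x).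
Proof. by rewrite /offset; split; [exact: ltn_ord | case: leqP; lia]. Qed.

Lemma cyc3_offset x a b c : cyc3 a b c = ncyc3 (offset x a) (offset x b) (offset x c).
Proof.
have := offsetE x a; have := offsetE x b; have := offsetE x c; have := ltn_ord x.
rewrite /ncyc3 /cyc3 => ? [? [[? ->] | [? ->]]] [? [[? ->] | [? ->]]] [? [[? ->] | [? ->]]];
  apply/idP/idP; lia.
Qed.

Lemma eqn_offset x a b : ((a:nat) == b) = (offset x a == offset x b).
Proof.
have := ltn_ord x; have := offsetE x a; have := offsetE x b.
by move=> ? ? ?; apply/idP/idP; lia.
Qed.

Lemma offset_id x : offset x x = 0.
Proof. by rewrite /offset leqnn subnn. Qed.

Lemma offset_inj x : injective (offset x).
Proof. by move=> a b eq_ab; apply/ord_inj/eqP; rewrite (eqn_offset x) eq_ab. Qed.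

End Offsets.

Ltac by_offsets x :=
  rewrite /crossb ?(cyc3_offset x) ?(eqn_offset x) ?offset_id /ncyc3
          ?ltn0 ?andbF ?andFb ?orbF ?orFb.

Section OffsetGeometry.
Variable n : nat.
Implicit Types (s t u v w x y z : 'I_n).

Lemma cyc3_of_offset x y z :
  (0 < offset x z)%N -> (offset x z < offset x y)%N -> cyc3 x z y.
Proof. by_offsets x; lia. Qed.

Lemma unseparated_side s t w z : cyc3 t w s -> ~~ crossb s t z w -> ~~ cyc3 s z t.
Proof. cyclic. Qed.

Lemma unseparated_endpoint s t z z' w : crossb s t z z' ->
  ~~ crossb s t z w -> ~~ crossb s t z' w -> w \in [set s; t].
Proof. rewrite in_set2 -!val_eqE /=; by_offsets s; lia. Qed.

Lemma nested_offset_right x s t s' t' :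
  (offset x s' < offset x s < offset x t')%N -> (offset x s < offset x t)%N ->
  ~~ crossb s t s' t' -> (offset x t <= offset x t')%N.
Proof. by_offsets x; lia. Qed.

Lemma nested_offset_left x s t s' t' :
  (offset x s' < offset x t < offset x t')%N -> (offset x s < offset x t)%N ->
  ~~ crossb s t s' t' -> (offset x s' <= offset x s)%N.
Proof. by_offsets x; lia. Qed.

Lemma unseparated_offsets x y s t v : cyc3 x v y -> cyc3 s v t ->
  ~~ cyc3 s x t -> ~~ cyc3 s y t ->
  (offset x s < offset x v < offset x t)%N && (offset x t <= offset x y)%N.
Proof. by_offsets x; lia. Qed.

Lemma separated_between x y s t v w : crossb s t v w ->
  ~~ crossb s t x w -> ~~ crossb s t y w -> cyc3 x v y ->
  exists s' t', [set s'; t'] = [set s; t] /\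
    (offset x s' < offset x v < offset x t')%N && (offset x t' <= offset x y)%N.
Proof.
move=> st_vw st_xw st_yw xvy.
case/orP: st_vw => [/andP [svt stw] | /andP [swt stv]].
  rewrite cyc3_rot in stw; exists s, t; split => //.
  exact: unseparated_offsets xvy svt (unseparated_side stw st_xw) (unseparated_side stw st_yw).
have ts_xw : ~~ crossb t s x w by apply: contra st_xw => /crossb_swapl.
have ts_yw : ~~ crossb t s y w by apply: contra st_yw => /crossb_swapl.
rewrite cyc3_rot in stv; exists t, s; split; first exact: set2C.
exact: unseparated_offsets xvy stv (unseparated_side swt ts_xw) (unseparated_side swt ts_yw).
Qed.

End OffsetGeometry.

Section CellAround.
Variable n : nat.
Implicit Types (E : {set {set 'I_n}}) (W : {set 'I_n}) (e : {set 'I_n}).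
Implicit Types (s t v w x y z : 'I_n).

Definition cell_around E W : {set 'I_n} :=
  [set z | ~~ [exists e in E, [exists w in W, separates e z w]]].

Lemma cell_aroundPn E W z : reflect
  (exists e w, [/\ e \in E, w \in W & separates e z w]) (z \notin cell_around E W).
Proof.
rewrite inE negbK; apply: (iffP exists_inP).
  by case=> e eE /exists_inP [w wW sep]; exists e, w.
case=> e [w [eE wW sep]].
by exists e => //; apply/exists_inP; exists w.
Qed.

Lemma cell_aroundP E W z : reflect
  (forall e w, e \in E -> w \in W -> ~~ separates e z w) (z \in cell_around E W).
Proof.
apply: (iffP idP) => [zC e w eE wW | unsep_z].
  by apply: contraL zC => sep; apply/cell_aroundPn; exists e, w.
by apply: contraT => /cell_aroundPn [e [w [eE wW sep]]]; case/negP: (unsep_z e w eE wW).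
Qed.

Lemma cell_around_noncrossing E W s t z w :
  z \in cell_around E W -> [set s; t] \in E -> w \in W -> ~~ crossb s t z w.
Proof.
move=> /cell_aroundP zC stE wW; apply: contra (zC _ w stE wW) => st_zw.
by apply/separatesP; exists s, t.
Qed.

Section Cell.
Variables (E : {set {set 'I_n}}) (W : {set 'I_n}).
Hypotheses (dissE : dissection setT E) (unsepW : separating E W = set0).
Hypothesis W_gt2 : (2 < #|W|)%N.
Local Notation C := (cell_around E W).

Lemma sub_cell_around : W \subset C.
Proof.
apply/subsetP => z zW; apply/cell_aroundP => e w eE wW; apply/negP => sep_zw.
have : e \in separating E W by apply/separatingP; split => //; exists z, w.
by rewrite unsepW inE.
Qed.

Lemma cell_around_subpolygon : is_subpolygon C.
Proof. exact: leq_trans W_gt2 (subset_leq_card sub_cell_around). Qed.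

Lemma cell_around_unseparated s t z z' :
  [set s; t] \in E -> z \in C -> z' \in C -> ~~ crossb s t z z'.
Proof.
move=> stE zC z'C; apply/negP => st_zz'.
have W_st : W \subset [set s; t].
  apply/subsetP => w wW; apply: unseparated_endpoint st_zz' _ _.
    exact: cell_around_noncrossing zC stE wW.
  exact: cell_around_noncrossing z'C stE wW.
by move: W_gt2 (subset_leq_card W_st); rewrite cards2; case: (s != t); lia.
Qed.

Lemma cell_around_noninternal e : e \in E -> ~ is_internal C e.
Proof.
move=> eE [[e_sub e_card] not_edge]; apply: not_edge.
have /cards2P [s [t [neq_st e_st]]] : #|e| == 2 by rewrite e_card.
have sC : s \in C by apply: (subsetP e_sub); rewrite e_st !inE eqxx.
have tC : t \in C by apply: (subsetP e_sub); rewrite e_st !inE eqxx orbT.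
have stE : [set s; t] \in E by rewrite -e_st.
have [/exists_inP [z zC szt] | no_z] := boolP [exists z in C, cyc3 s z t].
  exists t, s; split => //; [by rewrite eq_sym | by rewrite e_st set2C |].
  move=> z' z'C; apply/negP => tz's.
  by case/negP: (cell_around_unseparated stE zC z'C); apply: cyc3_crossb szt tz's.
exists s, t; split => // z zC; apply: contra no_z => szt.
by apply/exists_inP; exists z.
Qed.

Lemma covering_diagonal x y v : x \in C -> y \in C -> v \notin C -> cyc3 x v y ->
  exists s t, [set s; t] \in E /\
    (offset x s < offset x v < offset x t)%N && (offset x t <= offset x y)%N.
Proof.
move=> xC yC /cell_aroundPn [e [w [eE wW]]].
case/separatesP=> s [t [e_st st_vw]] xvy; rewrite e_st in eE.
have [s' [t' [st'_st span]]] := separated_between st_vw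
  (cell_around_noncrossing xC eE wW) (cell_around_noncrossing yC eE wW) xvy.
by exists s', t'; rewrite st'_st.
Qed.

Lemma cell_around_edge x y z0 : x \in C -> y \in C -> cyc3 x z0 y ->
  (forall z, z \in C -> ~~ cyc3 x z y) -> [set x; y] \in E.
Proof.
(* A diagonal of E with ends on the arc from x to y and of maximal span is
   {x, y}: otherwise one of its ends lies strictly inside the arc, hence
   outside C, and is covered by a wider diagonal of E not crossing it. *)
move=> xC yC xz0y edge_xy.
have cover v : cyc3 x v y -> exists s t, [set s; t] \in E /\
    (offset x s < offset x v < offset x t)%N && (offset x t <= offset x y)%N.
  by move=> xvy; apply: covering_diagonal xC yC (contraL (edge_xy v) xvy) xvy.
pose admissible (st : 'I_n * 'I_n) :=
  ([set st.1; st.2] \in E) && (offset x st.1 < offset x st.2 <= offset x y)%N.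
pose span (st : 'I_n * 'I_n) := offset x st.2 - offset x st.1.
have [s0 [t0 [st0E span0]]] := cover z0 xz0y.
have adm0 : admissible (s0, t0) by rewrite /admissible st0E /=; move: span0; lia.
case: (@arg_maxnP _ (s0, t0) admissible span adm0) => [[s t]].
rewrite /admissible /= => /andP [stE st_y] span_max.
have nested s' t' : [set s'; t'] \in E -> ~~ crossb s t s' t'.
  by move=> st'E; apply: dissection_noncrossing dissE stE st'E.
have wider s' t' : [set s'; t'] \in E -> (offset x s' < offset x t' <= offset x y)%N ->
    (offset x t' - offset x s' <= offset x t - offset x s)%N.
  by move=> st'E st'_y; apply: (span_max (s', t')); rewrite /admissible st'E.
have s_x : offset x s = offset x x.
  rewrite offset_id; apply/eqP; rewrite -leqn0 leqNgt; apply/negP => s_pos.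
  have s_y : (offset x s < offset x y)%N by move: st_y; lia.
  have [s' [t' [st'E /andP [s_in t'_y]]]] := cover s (cyc3_of_offset s_pos s_y).
  have s_t : (offset x s < offset x t)%N by move: st_y; lia.
  have := nested_offset_right s_in s_t (nested s' t' st'E).
  have := wider s' t' st'E; move: s_in t'_y; lia.
have t_y : offset x t = offset x y.
  apply/eqP; rewrite eqn_leq (proj2 (andP st_y)) leqNgt; apply/negP => t_lt_y.
  have t_pos : (0 < offset x t)%N by move: st_y; lia.
  have [s' [t' [st'E /andP [t_in t'_y]]]] := cover t (cyc3_of_offset t_pos t_lt_y).
  have s_t : (offset x s < offset x t)%N by move: st_y; lia.
  have := nested_offset_left t_in s_t (nested s' t' st'E).
  have := wider s' t' st'E; move: t_in t'_y; lia.
by rewrite -(offset_inj s_x) -(offset_inj t_y).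
Qed.

Lemma cell_around_edges d : is_edge C d -> is_edge setT d \/ d \in E.
Proof.
move=> [x [y [xC yC neq_xy -> edge_xy]]].
have [/existsP [z0 xz0y] | no_between] := boolP [exists z, cyc3 x z y].
  by right; apply: cell_around_edge xC yC xz0y edge_xy.
left; exists x, y; split; rewrite ?inE // => z _.
by apply: contra no_between => xzy; apply/existsP; exists z.
Qed.

Lemma is_cell_around : is_cell E C.
Proof.
split; [exact: cell_around_subpolygon | exact: cell_around_edges | ].
exact: cell_around_noninternal.
Qed.

End Cell.
End CellAround.

Lemma cell_containing n (E : {set {set 'I_n}}) (S : {set 'I_n}) a b c d :
  dissection setT E -> separating E S = set0 ->
  a \in S -> b \in S -> c \in S -> d \in S -> crossb a b c d ->
  exists2 C, is_cell E C & [/\ a \in C, b \in C, c \in C & d \in C].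
Proof.
move=> dissE unsepS aS bS cS dS abcd.
have /and4P [neq_ab neq_ac _ /and3P [neq_bc _ _]] := crossb_neq abcd.
have S_gt2 : (2 < #|S|)%N.
  by apply/card_gt2P; exists a, b, c; split; last split; rewrite // eq_sym.
have /subsetP S_C := sub_cell_around unsepS.
by exists (cell_around E S); [exact: is_cell_around | split; apply: S_C].
Qed.

Lemma is_diag_set2 n (C : {set 'I_n}) x y :
  x \in C -> y \in C -> x != y -> is_diag C [set x; y].
Proof.
move=> xC yC neq_xy; split; last by rewrite cards2 neq_xy.
by apply/subsetP => z; rewrite !inE => /orP [] /eqP ->.
Qed.

Lemma ptolemy_congr (K : semifield) n (C : {set 'I_n}) (f g : {set 'I_n} -> K) a b c d :
  {in C &, forall x y, x != y -> f [set x; y] = g [set x; y]} ->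
  a \in C -> b \in C -> c \in C -> d \in C -> crossb a b c d ->
  ptolemy f a b c d <-> ptolemy g a b c d.
Proof.
move=> f_g aC bC cC dC abcd.
have /and4P [neq_ab neq_ac neq_ad /and3P [neq_bc neq_bd neq_cd]] := crossb_neq abcd.
by rewrite /ptolemy !f_g.
Qed.

Theorem theoremC (K : semifield) (n : nat) (E : {set {set 'I_n}})
    (Dc : {set 'I_n} -> {set {set 'I_n}}) (fc : {set 'I_n} -> {set 'I_n} -> K)
    (D : {set {set 'I_n}}) (f : {set 'I_n} -> K) :
  (3 <= n)%N ->
  dissection setT E ->
  (forall C, is_cell E C -> dissection C (Dc C)) ->
  (forall C, is_cell E C -> weak_frieze C (Dc C) (fc C)) ->
  (forall C1 C2 d, is_cell E C1 -> is_cell E C2 ->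
     is_diag C1 d -> is_diag C2 d -> fc C1 d = fc C2 d) ->
  (forall d, d \in D <-> d \in E \/ exists2 C, is_cell E C & d \in Dc C) ->
  weak_frieze setT D f ->
  (forall C d, is_cell E C -> is_diag C d -> f d = fc C d) ->
  (frieze setT f <-> forall C, is_cell E C -> frieze C (fc C)).
Proof.
(* Only the inclusion of E in D is used. *)
move=> _ dissE _ _ _ memD wfD f_fc.
have f_fc_in C : is_cell E C ->
    {in C &, forall x y, x != y -> f [set x; y] = fc C [set x; y]}.
  by move=> cellC x y xC yC neq_xy; apply/f_fc/is_diag_set2.
split=> [frieze_f C cellC a b c d aC bC cC dC abcd | frieze_cells].
  apply: (ptolemy_congr (f_fc_in C cellC) aC bC cC dC abcd).1.
  by apply: frieze_f; rewrite ?in_setT.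
apply: (frieze_of_unseparated dissE _ wfD) => [e eE | S unsepS a b c d aS bS cS dS abcd].
  by apply/memD; left.
have [C cellC [aC bC cC dC]] := cell_containing dissE unsepS aS bS cS dS abcd.
apply: (ptolemy_congr (f_fc_in C cellC) aC bC cC dC abcd).2.
exact: frieze_cells.
Qed.
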